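(* Let $T\in V$ be a target variable. If $0<\zeta_T<n$ and $\Upsilon$ is conservative, then $\bigcup_{i=1}^{n}MB_i(T)=MB(T)$.
   Context: Let $G=(V,E)$ be a DAG (causal Bayesian network) over a finite set $V$ of random variables with joint distribution $P$ satisfying the Markov condition with respect to $G$; causal sufficiency is assumed. For $X\in V$, $pa(X)$ and $ch(X)$ are the parents and children of $X$ in $G$, $sp(X)=\big(\bigcup_{Y\in ch(X)}pa(Y)\big)\setminus\{X\}$ is the set of spouses, and $MB(X)=pa(X)\cup ch(X)\cup sp(X)$ is the Markov blanket. There are $n\ge 1$ intervention experiments; in the $i$-th, the set $\Upsilon_i\subseteq V$ (possibly empty) is manipulated, and $\Upsilon=\{\Upsilon_1,\dots,\Upsilon_n\}$. The post-intervention DAG is $G_i=(V,E_i)$ with $E_i=\{(a,b)\in E: b\notin\Upsilon_i\}$, with distribution $P_i(V)=\prod_{V_j\notin\Upsilon_i}P(V_j\mid pa(V_j))\prod_{V_j\in\Upsilon_i}P_i(V_j)$, and $D_i$ is a dataset drawn from $P_i$. It is assumed that each $P_i$ is faithful to $G_i$ and that conditional independence tests on $D_i$ are reliable (return exactly the conditional independences of $P_i$). $MB_i(T)$ denotes the Markov blanket of $T$ found in $D_i$, i.e. the set of parents, children and spouses of $T$ in $G_i$. $\zeta_T=|\{i:T\in\Upsilon_i\}|$. $\Upsilon$ is called conservative if for every $V_j\in\bigcup_{i=1}^n\Upsilon_i$ there exists $i$ with $V_j\notin\Upsilon_i$. *)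

From mathcomp Require Import all_boot.
Set Implicit Arguments. Unset Strict Implicit. Unset Printing Implicit Defensive.

Section Graphs.
Variable V : finType.

(* A directed graph is an edge relation: E a b means a -> b. *)
Definition acyclic (E : rel V) : Prop :=
  forall a b, E a b -> ~~ connect E b a.

Definition pa (E : rel V) (X : V) : {set V} := [set Y | E Y X].
Definition ch (E : rel V) (X : V) : {set V} := [set Y | E X Y].
Definition sp (E : rel V) (X : V) : {set V} :=
  (\bigcup_(Y in ch E X) pa E Y) :\ X.
Definition MB (E : rel V) (X : V) : {set V} := pa E X :|: ch E X :|: sp E X.

Definition post_interv (E : rel V) (U : {set V}) : rel V :=
  [rel a b | E a b && (b \notin U)].

Definition MB_i (E : rel V) (n : nat) (Ups : 'I_n -> {set V}) (i : 'I_n) (T : V)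
  : {set V} := MB (post_interv E (Ups i)) T.

Definition zeta (n : nat) (Ups : 'I_n -> {set V}) (T : V) : nat :=
  #|[set i : 'I_n | T \in Ups i]|.

Definition conservative (n : nat) (Ups : 'I_n -> {set V}) : Prop :=
  forall v, v \in (\bigcup_(i < n) Ups i) -> exists i : 'I_n, v \notin Ups i.

End Graphs.

From mathcomp Require Import all_boot.

(* Every edge a -> b of G survives in each G_i with b outside Υ_i, and
   conservativeness (with n >= 1 for variables that are never manipulated)
   provides such an i for every b.  Each way of entering MB(T) — as a parent,
   a child or a spouse — is witnessed by edges into one single node, so it
   survives in a single experiment; conversely G_i is a subgraph of G and the
   Markov blanket is monotone in the edge relation. *)

Section MarkovBlanket.
Variable V : finType.
Implicit Types (E F : rel V) (X : V).

Lemma MB_subrel E F X : subrel F E -> MB F X \subset MB E X.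
Proof.
move=> FE; apply/subsetP => x; rewrite !inE.
case/orP => [/orP [/FE -> // | /FE ->] | /andP [xX /bigcupP [y]]]; rewrite ?orbT //.
rewrite !inE => /FE Xy /FE xy.
apply/orP; right; rewrite xX; apply/bigcupP; exists y; by rewrite inE.
Qed.

Lemma bigcup_MB (I : finType) (F : I -> rel V) E X :
  (forall i, subrel (F i) E) ->
  (forall b, exists i, forall a, E a b -> F i a b) ->
  \bigcup_i MB (F i) X = MB E X.
Proof.
move=> FE inF; apply/eqP; rewrite eqEsubset; apply/andP; split.
  by apply/bigcupsP => i _; exact: MB_subrel.
apply/subsetP => x; rewrite !inE.
case/orP => [/orP [xX | Xx] | /andP [xX /bigcupP [y]]].
- have [i Fi] := inF X; apply/bigcupP; exists i => //.
  by rewrite !inE Fi.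
- have [i Fi] := inF x; apply/bigcupP; exists i => //.
  by rewrite !inE Fi ?orbT.
- rewrite !inE => Xy xy; have [i Fi] := inF y; apply/bigcupP; exists i => //.
  rewrite !inE xX; apply/orP; right; apply/bigcupP; exists y; by rewrite inE Fi.
Qed.

Lemma post_interv_subrel E (U : {set V}) : subrel (post_interv E U) E.
Proof. by move=> a b /andP []. Qed.

Lemma post_interv_in_edge E (U : {set V}) a b :
  b \notin U -> E a b -> post_interv E U a b.
Proof. by move=> bU Eab; rewrite /post_interv /= Eab bU. Qed.

Lemma conservative_notin n (Ups : 'I_n -> {set V}) v :
  0 < n -> conservative Ups -> exists i : 'I_n, v \notin Ups i.
Proof.
move=> n_gt0 consUps.
case: (boolP (v \in \bigcup_(i < n) Ups i)) => [/consUps // | vUps].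
exists (Ordinal n_gt0); apply: contra vUps => vU.
by apply/bigcupP; exists (Ordinal n_gt0).
Qed.

End MarkovBlanket.

Theorem theorem5 (V : finType) (E : rel V) (n : nat) (Ups : 'I_n -> {set V})
  (T : V) :
  acyclic E -> 1 <= n ->
  0 < zeta Ups T < n ->
  conservative Ups ->
  \bigcup_(i < n) MB_i E Ups i T = MB E T.
Proof.
move=> _ n_gt0 _ consUps.
apply: bigcup_MB => [i | b]; first exact: post_interv_subrel.
have [i bUi] := @conservative_notin _ _ Ups b n_gt0 consUps.
by exists i => a; exact: post_interv_in_edge.
Qed.
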